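(* Let $R$ be a commutative ring, $S$ a subring of $R$, $I$ an ideal of $S$, $n\ge1$, $f\in(T_n(R))[x]$ and $1\le i\le j\le n$. [Right] The following are equivalent: (1) $[f(C)]_{ij}\in I$ for all $C\in T_n(S)$; (2) $[f_{ih}(C)]_{hj}\in I$ for all $C\in T_n(S)$ and all $h$ with $i\le h\le j$; (3) $\langle f_{ih},p_{hj}\rangle\in\mathrm{Int}(S^{\ast},I)$ for all $h$ with $i\le h\le j$. [Left] The following are equivalent: (1) $[f(C)_\ell]_{ij}\in I$ for all $C\in T_n(S)$; (2) $[f_{hj}(C)]_{ih}\in I$ for all $C\in T_n(S)$ and all $h$ with $i\le h\le j$; (3) $\langle f_{hj},p_{ih}\rangle\in\mathrm{Int}(S^{\ast},I)$ for all $h$ with $i\le h\le j$.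
   Context: $\mathbb{N}=\{1,2,3,\dots\}$. $T_n(A)$ denotes the ring of upper triangular $n\times n$ matrices over a ring $A$, and $[M]_{ij}$ the $(i,j)$-entry of a matrix $M$. For $f=\sum_k F_kx^k\in(T_n(R))[x]$ with $F_k\in T_n(R)$, right substitution is $f(C)=\sum_kF_kC^k$ and left substitution is $f(C)_\ell=\sum_kC^kF_k$. Writing $f_{ij}^{(k)}=[F_k]_{ij}$, set $f_{ij}=\sum_k f_{ij}^{(k)}x^k\in R[x]$. For $g\in R[x]$, $g(C)$ is the usual evaluation at a matrix. Let $R[X]=R[\{x_{ab}\mid a,b\in\mathbb{N}\}]$. Path polynomials: for $1\le i\le j$ and $k>0$, $p_{ij}^{(k)}=\sum_{i=i_1\le i_2\le\dots\le i_{k+1}=j} x_{i_1i_2}\cdots x_{i_ki_{k+1}}$; for $1\le i\le j$, $p_{ij}^{(0)}=\delta_{ij}$; for $i>j$, $p_{ij}^{(k)}=0$. For $g=\sum_kg_kx^k\in R[x]$, $\langle g,p_{ij}\rangle=\sum_k g_kp_{ij}^{(k)}\in R[X]$. $\mathrm{Int}(S^{\ast},I)$ denotes the set of polynomials in $R[X]$ that take values in $I$ whenever elements of $S$ are substituted (independently) for all the variables. *)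

From HB Require Import structures.
From mathcomp Require Import all_boot all_order all_algebra.
Set Implicit Arguments. Unset Strict Implicit. Unset Printing Implicit Defensive.
Import Order.TTheory GRing.Theory Num.Theory.
Local Open Scope ring_scope.

Section Defs.
Variable R : comNzRingType.

Definition ideal_of (S I : pred R) : Prop :=
  [/\ {subset I <= S}, 0 \in I,
      {in I &, forall u v, u + v \in I},
      {in I, forall u, - u \in I} &
      {in S & I, forall s u, s * u \in I}].

Definition upper_tri (m : nat) (A : 'M[R]_m) : Prop :=
  forall a b : 'I_m, (b < a)%N -> A a b = 0.

Definition in_Tn (S : pred R) (m : nat) (C : 'M[R]_m) : Prop :=
  upper_tri C /\ forall a b, C a b \in S.

Definition rsubst (m : nat) (f : {poly 'M[R]_m.+1}) (C : 'M[R]_m.+1) :=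
  \sum_(k < size f) f`_k * C ^+ k.

Definition lsubst (m : nat) (f : {poly 'M[R]_m.+1}) (C : 'M[R]_m.+1) :=
  \sum_(k < size f) C ^+ k * f`_k.

Definition entry_poly (m : nat) (f : {poly 'M[R]_m.+1}) (i j : 'I_m.+1)
  : {poly R} := \poly_(k < size f) (f`_k i j).

(* Value of the path polynomial p_{ij}^{(k)} under the assignment
   x_{ab} |-> a b c (variables indexed by nat, i.e. 0-based). *)
Definition path_eval (asg : nat -> nat -> R) (k i j : nat) : R :=
  if k is k'.+1 then
    \sum_(t : k'.+2 .-tuple 'I_j.+1 |
            [&& val (tnth t ord0) == i, val (tnth t ord_max) == j
              & sorted leq (map val t)])
       \prod_(l < k'.+1)
          asg (tnth t (widen_ord (leqnSn _) l)) (tnth t (lift ord0 l))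
  else (i == j)%:R.

Definition pairing_eval (g : {poly R}) (i j : nat) (asg : nat -> nat -> R) : R :=
  \sum_(k < size g) g`_k * path_eval asg k i j.

(* Membership in Int(S^*, I) of a polynomial of R[X], given through its
   evaluation map on assignments of the variables x_{ab}. *)
Definition in_Int (S I : pred R) (P : (nat -> nat -> R) -> R) : Prop :=
  forall asg : nat -> nat -> R, (forall a b, asg a b \in S) -> P asg \in I.

End Defs.

From HB Require Import structures.
From mathcomp Require Import all_boot all_order all_algebra.
Import GRing.Theory.
Set Implicit Arguments. Unset Strict Implicit. Unset Printing Implicit Defensive.
Local Open Scope ring_scope.

(* For upper triangular C, the (h, j) entry of C^k is the path polynomial
   p_hj^(k) evaluated at the entries of C, so [g(C)]_hj is <g, p_hj> evaluated
   at C; as every S-valued assignment of the x_ab comes from some C in T_n(S),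
   this gives (2) <-> (3).  Expanding f(C) gives [f(C)]_ij = sum_h [f_ih(C)]_hj,
   whence (2) -> (1).  Conversely, zeroing the rows of C above row x yields
   D_x C in T_n(S) with (D_x C)^k = D_x C^k for k >= 1, so (1) at D_x C puts the
   tail sums sum_(h >= x) [f_ih(C)]_hj in I; their successive differences are
   the individual terms.  The left case truncates columns instead. *)

Notation tcons x t := (@cons_tuple _ _ x t).

Lemma big_tuple_cons (R : nmodType) (T : finType) m
  (P : pred (m.+1.-tuple T)) (F : m.+1.-tuple T -> R) :
  \sum_(t | P t) F t =
  \sum_(t : m.-tuple T) \sum_(x : T | P (tcons x t)) F (tcons x t).
Proof.
rewrite (exchange_big_dep predT) //= pair_big_dep /=.
rewrite (reindex (fun p : T * m.-tuple T => tcons p.1 p.2)) /=.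
  by apply: eq_bigl => -[x t].
exists (fun t => (thead t, [tuple of behead t])) => [[x t] _ | t _] /=.
  by congr (_, _); apply: val_inj.
by case/tupleP: t => x t; apply: val_inj.
Qed.

Section PathPolynomials.
Variables (R : comNzRingType) (asg : nat -> nat -> R).

Definition path_weight J k (t : k.+1.-tuple 'I_J) : R :=
  \prod_(l < k) asg (tnth t (widen_ord (leqnSn k) l)) (tnth t (lift ord0 l)).

(* [path_sum k] is [path_eval k] for k > 0 by definition; for k = 0 it is
   still the tuple sum, which makes the recursion uniform. *)
Definition path_sum k i j : R :=
  \sum_(t : k.+1.-tuple 'I_j.+1 |
          [&& val (tnth t ord0) == i, val (tnth t ord_max) == j
            & sorted leq (map val t)]) path_weight t.

Lemma tnth_cons_max T k (x : T) (t : k.+1.-tuple T) :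
  tnth (tcons x t) ord_max = tnth t ord_max.
Proof.
have -> : (ord_max : 'I_k.+2) = lift ord0 (ord_max : 'I_k.+1) by apply: val_inj.
by rewrite tnthS.
Qed.

Lemma path_weight_cons J k (x : 'I_J) (t : k.+1.-tuple 'I_J) :
  path_weight (tcons x t) = asg x (thead t) * path_weight t.
Proof.
rewrite /path_weight big_ord_recl; congr (_ * _).
  have -> : widen_ord (leqnSn k.+1) ord0 = ord0 by apply: val_inj.
  by rewrite tnth0 tnthS.
apply: eq_bigr => l _.
have -> : widen_ord (leqnSn k.+1) (lift ord0 l) = lift ord0 (widen_ord (leqnSn k) l)
  by apply: val_inj.
by rewrite !tnthS.
Qed.

Lemma path_cons_sorted J k (x : 'I_J) (t : k.+1.-tuple 'I_J) :
  path leq x (map val t) = (x <= thead t)%N && sorted leq (map val t).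
Proof. by case/tupleP: t. Qed.

Lemma path_sumS k i j :
  path_sum k.+1 i j = \sum_(l < j.+1 | (i <= l)%N) asg i l * path_sum k l j.
Proof.
under [RHS]eq_bigr do rewrite mulr_sumr.
rewrite /path_sum big_tuple_cons [RHS](exchange_big_dep predT) //=.
apply: eq_bigr => t _.
under eq_bigl => x do rewrite tnth0 tnth_cons_max path_cons_sorted /=.
under eq_bigr => x _ do rewrite path_weight_cons.
case: (boolP ((val (tnth t ord_max) == j) && sorted leq (map val t)))
  => [/andP[-> ->] | t_bad].
  under eq_bigl do rewrite !andbT andbC andTb.
  under [RHS]eq_bigl do rewrite !andbT eq_sym.
  rewrite (big_ord1_cond_eq _ (fun x => asg x (thead t) * path_weight t)
                                (fun x => x <= thead t)%N).
  rewrite (big_ord1_cond_eq _ (fun l => asg i l * path_weight t)) ltn_ord /=.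
  have [le_it|] := leqP i (thead t); last by rewrite andbF.
  by rewrite (leq_ltn_trans le_it (ltn_ord _)).
rewrite [RHS]big_pred0 => [|l]; last by rewrite !andbF.
by rewrite big_pred0 // => x; apply: contraNF t_bad => /and4P[_ -> _ ->].
Qed.

Lemma path_sum0 i j : path_sum 0 i j = (i == j)%:R.
Proof.
rewrite /path_sum big_tuple_cons (big_pred1 [tuple]) => [|t]; last first.
  by apply/esym/eqP/tuple0.
under eq_bigl => x do rewrite /= andbT andbC.
under eq_bigr => x _ do rewrite /path_weight big_ord0.
rewrite (big_ord1_cond_eq _ (fun=> 1) (fun x => x == j)).
by case: eqP => [->|]; rewrite ?ltnSn ?andbF.
Qed.

Lemma path_eval_sum k i j : path_eval asg k i j = path_sum k i j.
Proof. by case: k => [|k] //; rewrite path_sum0. Qed.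

Lemma path_evalS k i j :
  path_eval asg k.+1 i j = \sum_(l < j.+1 | (i <= l)%N) asg i l * path_eval asg k l j.
Proof.
by under [RHS]eq_bigr do rewrite path_eval_sum; rewrite path_eval_sum path_sumS.
Qed.

End PathPolynomials.

Lemma path_eval_lt (R : comNzRingType) (asg : nat -> nat -> R) k i j :
  (j < i)%N -> path_eval asg k i j = 0.
Proof.
case: k => [|k] ltji; first by rewrite /= gtn_eqF.
rewrite path_evalS big1 // => l le_il.
by have := leq_ltn_trans le_il (ltn_ord l); rewrite ltnS leqNgt ltji.
Qed.

Lemma eq_path_eval (R : comNzRingType) (asg1 asg2 : nat -> nat -> R) k i j :
  (forall x y, (i <= x <= y)%N -> (y <= j)%N -> asg1 x y = asg2 x y) ->
  path_eval asg1 k i j = path_eval asg2 k i j.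
Proof.
elim: k i => [|k IHk] i eq_asg //; rewrite !path_evalS.
apply: eq_bigr => l le_il; have le_lj : (l <= j)%N by rewrite -ltnS.
rewrite eq_asg ?leqnn ?le_il // (IHk l) // => x y /andP[le_lx le_xy] le_yj.
by apply: eq_asg; rewrite ?(leq_trans le_il le_lx).
Qed.

Section Projections.
Variable A : pzSemiRingType.
Implicit Types (c d : A).

Lemma expr_lproj c d n : d * c * d = d * c -> (d * c) ^+ n.+1 = d * c ^+ n.+1.
Proof.
move=> dcd; elim: n => [|n IHn]; first by rewrite !expr1.
by rewrite exprS IHn mulrA dcd -mulrA -exprS.
Qed.

Lemma expr_rproj c d n : d * c * d = c * d -> (c * d) ^+ n.+1 = c ^+ n.+1 * d.
Proof.
move=> dcd; elim: n => [|n IHn]; first by rewrite !expr1.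
by rewrite exprSr IHn -mulrA [d * (c * d)]mulrA dcd mulrA -exprSr.
Qed.

End Projections.

Section UpperTriangular.
Variables (R : comNzRingType) (m : nat).
Implicit Types (C : 'M[R]_m.+1) (p : {poly R}) (f : {poly 'M[R]_m.+1}).

Definition mx_asg C : nat -> nat -> R := fun x y => C (inord x) (inord y).

Lemma exprmx_path_eval C k (a b : 'I_m.+1) :
  upper_tri C -> (C ^+ k) a b = path_eval (mx_asg C) k a b.
Proof.
move=> C_upper; elim: k a b => [|k IHk] a b; first by rewrite expr0 mxE.
rewrite exprS -mulmxE mxE path_evalS.
rewrite (big_ord_widen_cond m.+1 (fun l => a <= l)%N
  (fun l => mx_asg C a l * path_eval (mx_asg C) k l b) (ltn_ord b)).
rewrite [RHS]big_mkcond; apply: eq_bigr => l _.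
rewrite IHk /mx_asg !inord_val.
have [le_al|lt_la] /= := leqP a l; last by rewrite C_upper ?mul0r.
by case: leqP => // lt_bl; rewrite path_eval_lt ?mulr0.
Qed.

Lemma horner_mx_polyE C n (E : nat -> R) a b :
  horner_mx C (\poly_(k < n) E k) a b = \sum_(k < n) E k * (C ^+ k) a b.
Proof.
rewrite poly_def raddf_sum summxE.
by apply: eq_bigr => k _; rewrite /= horner_mxZ rmorphXn /= horner_mx_X mxE.
Qed.

Lemma horner_mxE C p a b :
  horner_mx C p a b = \sum_(k < size p) p`_k * (C ^+ k) a b.
Proof. by rewrite -{1}[p]coefK horner_mx_polyE. Qed.

Lemma horner_mx_pairing C p (a b : 'I_m.+1) :
  upper_tri C -> horner_mx C p a b = pairing_eval p a b (mx_asg C).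
Proof.
by move=> C_upper; rewrite horner_mxE; apply: eq_bigr => k _; rewrite exprmx_path_eval.
Qed.

Lemma horner_mx_upper0 C p (a b : 'I_m.+1) :
  upper_tri C -> (b < a)%N -> horner_mx C p a b = 0.
Proof.
move=> C_upper lt_ba; rewrite horner_mx_pairing // /pairing_eval.
by rewrite big1 // => k _; rewrite path_eval_lt ?mulr0.
Qed.

Lemma entry_poly_lower0 f (a b : 'I_m.+1) :
  (forall k, upper_tri f`_k) -> (b < a)%N -> entry_poly f a b = 0.
Proof.
move=> f_upper lt_ba; apply/polyP => k.
by rewrite coef_poly coef0; case: ifP => // _; apply: f_upper.
Qed.

Lemma rsubstE f C (i j : 'I_m.+1) :
  rsubst f C i j = \sum_h horner_mx C (entry_poly f i h) h j.
Proof.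
under [RHS]eq_bigr do rewrite horner_mx_polyE.
by rewrite summxE exchange_big; apply: eq_bigr => k _; rewrite -mulmxE mxE.
Qed.

Lemma lsubstE f C (i j : 'I_m.+1) :
  lsubst f C i j = \sum_h horner_mx C (entry_poly f h j) i h.
Proof.
under [RHS]eq_bigr do rewrite horner_mx_polyE.
rewrite summxE exchange_big; apply: eq_bigr => k _; rewrite -mulmxE mxE.
by apply: eq_bigr => h _; rewrite mulrC.
Qed.

End UpperTriangular.

Section Restriction.
Variables (R : comNzRingType) (m : nat).
Implicit Types (C : 'M[R]_m.+1) (f : {poly 'M[R]_m.+1}) (P : pred 'I_m.+1).

Definition pred_mx P : 'M[R]_m.+1 := diag_mx (\row_a (P a)%:R).

Lemma pred_mx_mulE P C a b : (pred_mx P * C) a b = if P a then C a b else 0.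
Proof. by rewrite -mulmxE mul_diag_mx !mxE; case: (P a); rewrite ?mul1r ?mul0r. Qed.

Lemma mul_pred_mxE P C a b : (C * pred_mx P) a b = if P b then C a b else 0.
Proof. by rewrite -mulmxE mul_mx_diag !mxE; case: (P b); rewrite ?mulr1 ?mulr0. Qed.

Lemma pred_mx_stablel P C :
  (forall a b, P a -> ~~ P b -> C a b = 0) ->
  pred_mx P * C * pred_mx P = pred_mx P * C.
Proof.
move=> C_closed; apply/matrixP => a b; rewrite mul_pred_mxE !pred_mx_mulE.
by case: ifP => // Pb; case: ifP => // Pa; rewrite C_closed ?Pb.
Qed.

Lemma pred_mx_stabler P C :
  (forall a b, ~~ P a -> P b -> C a b = 0) ->
  pred_mx P * C * pred_mx P = C * pred_mx P.
Proof.
move=> C_closed; apply/matrixP => a b; rewrite !mul_pred_mxE pred_mx_mulE.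
by case: ifP => // Pb; case: ifP => // Pa; rewrite C_closed ?Pa.
Qed.

Lemma in_Tn_pred_mxl S P C : 0 \in S -> in_Tn S C -> in_Tn S (pred_mx P * C).
Proof.
move=> S0 [C_upper CS]; split=> [a b lt_ba|a b]; rewrite pred_mx_mulE.
  by rewrite C_upper // if_same.
by case: ifP.
Qed.

Lemma in_Tn_pred_mxr S P C : 0 \in S -> in_Tn S C -> in_Tn S (C * pred_mx P).
Proof.
move=> S0 [C_upper CS]; split=> [a b lt_ba|a b]; rewrite mul_pred_mxE.
  by rewrite C_upper // if_same.
by case: ifP.
Qed.

Lemma rsubst_pred_mx P f C (i j : 'I_m.+1) :
  P j -> (forall a b, P a -> ~~ P b -> C a b = 0) ->
  rsubst f (pred_mx P * C) i j = \sum_(h | P h) horner_mx C (entry_poly f i h) h j.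
Proof.
move=> Pj /pred_mx_stablel stable.
rewrite rsubstE [RHS]big_mkcond; apply: eq_bigr => h _.
rewrite !horner_mx_polyE; case: ifP => Ph; last first.
  apply: big1 => -[[|k] lt_kf] _; last by rewrite expr_lproj // pred_mx_mulE Ph mulr0.
  rewrite expr0 mxE; case: eqP => [eq_hj|_]; last by rewrite mulr0.
  by rewrite eq_hj Pj in Ph.
apply: eq_bigr => -[[|k] lt_kf] _ //=.
by rewrite expr_lproj // pred_mx_mulE Ph.
Qed.

Lemma lsubst_pred_mx P f C (i j : 'I_m.+1) :
  P i -> (forall a b, ~~ P a -> P b -> C a b = 0) ->
  lsubst f (C * pred_mx P) i j = \sum_(h | P h) horner_mx C (entry_poly f h j) i h.
Proof.
move=> Pi /pred_mx_stabler stable.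
rewrite lsubstE [RHS]big_mkcond; apply: eq_bigr => h _.
rewrite !horner_mx_polyE; case: ifP => Ph; last first.
  apply: big1 => -[[|k] lt_kf] _; last by rewrite expr_rproj // mul_pred_mxE Ph mulr0.
  rewrite expr0 mxE; case: eqP => [eq_ih|_]; last by rewrite mulr0.
  by rewrite -eq_ih Pi in Ph.
apply: eq_bigr => -[[|k] lt_kf] _ //=.
by rewrite expr_rproj // mul_pred_mxE Ph.
Qed.

End Restriction.

Lemma subring_closed0 (R : comNzRingType) (S : pred R) : subring_closed S -> 0 \in S.
Proof. by case=> S1 SB _; rewrite -(subrr 1) SB. Qed.

Section IntegerValued.
Variables (R : comNzRingType) (S I : pred R).
Hypothesis S0 : 0 \in S.

Lemma in_Int_pairingP m (p : {poly R}) (a b : 'I_m.+1) :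
  in_Int S I (pairing_eval p a b) <->
  forall C : 'M[R]_m.+1, in_Tn S C -> horner_mx C p a b \in I.
Proof.
split=> [pI C [C_upper CS] | horner_I asg asgS].
  by rewrite horner_mx_pairing //; apply: pI => x y; apply: CS.
pose C : 'M[R]_m.+1 := \matrix_(x, y) if (x <= y)%N then asg x y else 0.
have C_Tn : in_Tn S C.
  by split=> [x y lt_yx|x y]; rewrite mxE; [rewrite leqNgt lt_yx | case: ifP].
have := horner_I C C_Tn; rewrite horner_mx_pairing; last by case: C_Tn.
congr (_ \in I); apply: eq_bigr => k _; congr (_ * _).
apply: eq_path_eval => x y /andP[_ le_xy] le_yb.
have lt_ym : (y < m.+1)%N := leq_ltn_trans le_yb (ltn_ord b).
by rewrite /mx_asg mxE !inordK ?le_xy // (leq_ltn_trans le_xy).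
Qed.

End IntegerValued.

Section Ideal.
Variables (R : comNzRingType) (S I : pred R).
Hypothesis idealI : ideal_of S I.

Lemma ideal_sub : {in I &, forall u v, u - v \in I}.
Proof. by case: idealI => _ _ ID IN _ u v uI vI; rewrite ID ?IN. Qed.

Lemma ideal_sum (T : finType) (P : pred T) (F : T -> R) :
  (forall t, P t -> F t \in I) -> \sum_(t | P t) F t \in I.
Proof. by case: idealI => _ I0 ID _ _ FI; apply: (big_ind (fun u => u \in I)). Qed.

Lemma ideal_suffix_sums n (g : 'I_n -> R) :
  (forall x : nat, \sum_(l : 'I_n | (x <= l)%N) g l \in I) -> forall h, g h \in I.
Proof.
move=> gI h; have := ideal_sub (gI h) (gI h.+1).
rewrite (bigD1 h) //=.
by under eq_bigl do rewrite eq_sym andbC -ltn_neqAle; rewrite addrK.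
Qed.

Lemma ideal_prefix_sums n (g : 'I_n -> R) :
  (forall x : nat, \sum_(l : 'I_n | (l < x)%N) g l \in I) -> forall h, g h \in I.
Proof.
move=> gI h; have := ideal_sub (gI h.+1) (gI h).
rewrite (bigD1 h) //=.
by under eq_bigl do rewrite ltnS andbC -ltn_neqAle; rewrite addrK.
Qed.

End Ideal.

Section TriangularSubstitution.
Variables (R : comNzRingType) (S I : pred R).
Hypotheses (S0 : 0 \in S) (idealI : ideal_of S I).
Variables (m : nat) (f : {poly 'M[R]_m.+1}).
Hypothesis f_upper : forall k, upper_tri f`_k.
Variables i j : 'I_m.+1.

Let I0 : 0 \in I. Proof. by case: idealI. Qed.

Lemma rsubst_ideal_entries :
  (forall C, in_Tn S C -> rsubst f C i j \in I) ->
  forall C, in_Tn S C -> forall h, horner_mx C (entry_poly f i h) h j \in I.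
Proof.
move=> fI C C_Tn h; have [C_upper _] := C_Tn.
apply: (ideal_suffix_sums idealI
         (g := fun h : 'I_m.+1 => horner_mx C (entry_poly f i h) h j)) => x.
have [le_xj|lt_jx] := leqP x j.
  rewrite -rsubst_pred_mx //; first exact/fI/in_Tn_pred_mxl.
  by move=> a b le_xa; rewrite -ltnNge => lt_bx; rewrite C_upper ?(leq_trans lt_bx).
by rewrite big1 // => h' le_xh; rewrite horner_mx_upper0 ?(leq_trans lt_jx).
Qed.

Lemma lsubst_ideal_entries :
  (forall C, in_Tn S C -> lsubst f C i j \in I) ->
  forall C, in_Tn S C -> forall h, horner_mx C (entry_poly f h j) i h \in I.
Proof.
move=> fI C C_Tn h; have [C_upper _] := C_Tn.
apply: (ideal_prefix_sums idealI
         (g := fun h : 'I_m.+1 => horner_mx C (entry_poly f h j) i h)) => x.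
have [lt_ix|le_xi] := ltnP i x.
  rewrite -lsubst_pred_mx //; first exact/fI/in_Tn_pred_mxr.
  by move=> a b; rewrite -leqNgt => le_xa lt_bx; rewrite C_upper ?(leq_trans lt_bx).
by rewrite big1 // => h' lt_hx; rewrite horner_mx_upper0 ?(leq_trans lt_hx).
Qed.

Lemma entries_ideal_rsubst :
  (forall C, in_Tn S C -> forall h : 'I_m.+1, (i <= h <= j)%N ->
     horner_mx C (entry_poly f i h) h j \in I) ->
  forall C, in_Tn S C -> rsubst f C i j \in I.
Proof.
move=> fI C C_Tn; have [C_upper _] := C_Tn.
rewrite rsubstE; apply: (ideal_sum idealI) => h _.
have [lt_hi|le_ih] := ltnP h i; first by rewrite entry_poly_lower0 // rmorph0 mxE.
have [lt_jh|le_hj] := ltnP j h; first by rewrite horner_mx_upper0.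
by apply: fI; rewrite ?le_ih.
Qed.

Lemma entries_ideal_lsubst :
  (forall C, in_Tn S C -> forall h : 'I_m.+1, (i <= h <= j)%N ->
     horner_mx C (entry_poly f h j) i h \in I) ->
  forall C, in_Tn S C -> lsubst f C i j \in I.
Proof.
move=> fI C C_Tn; have [C_upper _] := C_Tn.
rewrite lsubstE; apply: (ideal_sum idealI) => h _.
have [lt_jh|le_hj] := ltnP j h; first by rewrite entry_poly_lower0 // rmorph0 mxE.
have [lt_hi|le_ih] := ltnP h i; first by rewrite horner_mx_upper0.
by apply: fI; rewrite ?le_ih.
Qed.

End TriangularSubstitution.

Unset Implicit Arguments. Set Strict Implicit.

Theorem lemma3p4 (R : comNzRingType) (S I : pred R)
  (hS : subring_closed S) (hI : ideal_of S I)
  (n : nat) (f : {poly 'M[R]_n.+1})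
  (hf : forall k, upper_tri f`_k)
  (i j : 'I_n.+1) (hij : (i <= j)%N) :
  [<-> forall C, in_Tn S C -> rsubst f C i j \in I;
       forall C, in_Tn S C -> forall h : 'I_n.+1, (i <= h <= j)%N ->
         horner_mx C (entry_poly f i h) h j \in I;
       forall h : 'I_n.+1, (i <= h <= j)%N ->
         in_Int S I (pairing_eval (entry_poly f i h) h j)]
  /\
  [<-> forall C, in_Tn S C -> lsubst f C i j \in I;
       forall C, in_Tn S C -> forall h : 'I_n.+1, (i <= h <= j)%N ->
         horner_mx C (entry_poly f h j) i h \in I;
       forall h : 'I_n.+1, (i <= h <= j)%N ->
         in_Int S I (pairing_eval (entry_poly f h j) i h)].
Proof.
have S0 := subring_closed0 hS.
split; tfae.
- by move=> fI C C_Tn h _; exact: (rsubst_ideal_entries S0 hI fI C_Tn).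
- by move=> entI h ijh; apply/(in_Int_pairingP I S0) => C C_Tn; apply: entI.
- move=> intI; apply: (entries_ideal_rsubst hI hf) => C C_Tn h ijh.
  by move/(in_Int_pairingP I S0): (intI h ijh); apply.
- by move=> fI C C_Tn h _; exact: (lsubst_ideal_entries S0 hI fI C_Tn).
- by move=> entI h ijh; apply/(in_Int_pairingP I S0) => C C_Tn; apply: entI.
- move=> intI; apply: (entries_ideal_lsubst hI hf) => C C_Tn h ijh.
  by move/(in_Int_pairingP I S0): (intI h ijh); apply.
Qed.
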